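(* Let $G$ be a BDH graph with color classes $X$ and $Y$, and let $v,v'\in V(G)$. Define $G\star\{v,v'\}$ as follows: if $v$ and $v'$ lie in different color classes, $G\star\{v,v'\}=G$; if they lie in the same color class, $G\star\{v,v'\}$ is obtained from $G$ by adding a new vertex $\widehat{vv'}$ to that color class, adjacent exactly to the vertices of $N(v)\cap N(v')$. Then $G\star\{v,v'\}$ is a BDH graph.
   Context: A graph $G$ is distance hereditary if for every connected induced subgraph $H$ of $G$ and all $u,v\in V(H)$, $d_H(u,v)=d_G(u,v)$; a BDH graph is a bipartite distance hereditary graph. (Equivalently, a bipartite graph is BDH iff it has no induced chordless cycle of length $\ge 6$ and no induced domino, where a domino is $C_6$ plus a chord joining two antipodal vertices.) $N(v)$ denotes the neighborhood of $v$. *)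

From mathcomp Require Import all_boot.
Set Implicit Arguments. Unset Strict Implicit. Unset Printing Implicit Defensive.

Definition simple_graph (T : finType) (e : rel T) : Prop :=
  symmetric e /\ irreflexive e.

Definition walk_in (T : finType) (e : rel T) (S : {set T}) (u v : T) (n : nat) : Prop :=
  exists p : seq T, [/\ size p = n, path e u p, last u p = v & all (mem S) (u :: p)].

Definition is_dist (T : finType) (e : rel T) (S : {set T}) (u v : T) (d : nat) : Prop :=
  walk_in e S u v d /\ forall m, m < d -> ~ walk_in e S u v m.

Definition induced_connected (T : finType) (e : rel T) (S : {set T}) : Prop :=
  forall u v, u \in S -> v \in S -> exists n, walk_in e S u v n.

(* Distance hereditary: for every connected induced subgraph H = G[S] and all u,v in H,
   d_H(u,v) = d_G(u,v) (equality of distances stated as: both have the same value). *)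
Definition distance_hereditary (T : finType) (e : rel T) : Prop :=
  forall S : {set T}, induced_connected e S ->
  forall u v, u \in S -> v \in S ->
  forall d, is_dist e S u v d <-> is_dist e [set: T] u v d.

Definition bipartite_with (T : finType) (e : rel T) (X Y : {set T}) : Prop :=
  [/\ X :&: Y = set0, X :|: Y = [set: T] &
      forall x y, e x y -> (x \in X) && (y \in Y) || (x \in Y) && (y \in X)].

Definition BDH_with (T : finType) (e : rel T) (X Y : {set T}) : Prop :=
  [/\ simple_graph e, bipartite_with e X Y & distance_hereditary e].

(* G * {v,v'} when v, v' lie in the same color class: vertex set option T,
   None is the new vertex adjacent exactly to N(v) ∩ N(v'). *)
Definition star_adj (T : finType) (e : rel T) (v v' : T) : rel (option T) :=
  fun a b =>
    match a, b with
    | Some x, Some y => e x y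
    | None, Some y => e v y && e v' y
    | Some x, None => e v x && e v' x
    | None, None => false
    end.

Definition star_class (T : finType) (v : T) (X : {set T}) : {set option T} :=
  [set a | if a is Some x then x \in X else v \in X].

From mathcomp Require Import all_boot zify.
From Stdlib Require Import Classical.
Set Implicit Arguments. Unset Strict Implicit. Unset Printing Implicit Defensive.

(* A symmetric irreflexive graph is distance hereditary iff each of its induced paths is a
   shortest path between its ends: an induced path is a shortest path in the subgraph it
   induces, and a shortest path is induced.

   Let w be the new vertex of G * {v,v'}.  If N(v) ∩ N(v') ⊆ N(u), sending w to u is a
   homomorphism onto G, so an induced path of G * {v,v'} whose image is an induced path of G
   is a shortest path.  For an induced path through w of length at least 3 such a u exists:
   u = v when w is interior, and u ∈ {v, v'} not adjacent to the vertex at distance 3 from w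
   when w is an end.  That the image stays induced follows from G having no triangles and
   its induced paths being shortest; the one delicate configuration is a domino. *)

Lemma walk_in_hom (A B : finType) (r : rel A) (s : rel B) (h : A -> B) a b n :
  {homo h : x y / r x y >-> s x y} -> walk_in r setT a b n -> walk_in s setT (h a) (h b) n.
Proof.
move=> Hh [p [Hs Hp Hl _]]; exists (map h p); split.
- by rewrite size_map.
- exact: (homo_path Hh Hp).
- by rewrite last_map Hl.
- by apply/allP => x _; rewrite inE.
Qed.

Section InducedPaths.
Variables (A : finType) (r : rel A).

Definition walk_fun (S : {set A}) (f : nat -> A) (n : nat) : Prop :=
  (forall i, i < n -> r (f i) (f i.+1)) /\ (forall i, i <= n -> f i \in S).

Lemma walk_inP S a b n :
  walk_in r S a b n <-> exists f, [/\ f 0 = a, f n = b & walk_fun S f n].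
Proof.
split.
- move=> [p [Hs Hp Hl Ha]].
  exists (nth a (a :: p)); split => //; first by rewrite -Hs -last_nth.
  split => i Hi.
  + by move/(pathP a): Hp; apply; rewrite Hs.
  + by move/(all_nthP a): Ha; apply => /=; lia.
- move=> [f [H0 Hn [Hw Hm]]].
  have Hnth i : i <= n -> nth a (a :: mkseq (f \o succn) n) i = f i.
    by case: i => [|i] Hi /=; rewrite ?H0 ?nth_mkseq.
  exists (mkseq (f \o succn) n); split.
  + by rewrite size_mkseq.
  + apply/(pathP a) => i; rewrite size_mkseq => Hi.
    by rewrite Hnth 1?nth_mkseq //; [apply: Hw | lia].
  + by rewrite (last_nth a) size_mkseq Hnth.
  + apply/(all_nthP a) => i; rewrite /= size_mkseq => Hi.
    by rewrite Hnth; [apply: Hm | ]; lia.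
Qed.

Lemma walk_fun_shortcut S f d i s :
  walk_fun S f d -> i + s <= d -> (i + s < d -> r (f i) (f (i + s).+1)) ->
  (i + s = d -> f i = f d) -> walk_in r S (f 0) (f d) (d - s).
Proof.
move=> [Hw Hm] isd Hjump Hend.
apply/walk_inP; exists (fun t => f (if t <= i then t else t + s)); split => //.
- case: ifP => H; last by congr f; lia.
  by rewrite (_ : d - s = i) ?Hend //; lia.
split => [t td | t td]; last by apply: Hm; case: ifP; lia.
case: ifP => H1; case: ifP => H2; try lia.
- by apply: Hw; lia.
- by rewrite (_ : t = i) 1?addSn; [apply: Hjump | ]; lia.
- by rewrite addSn; apply: Hw; lia.
Qed.

Lemma walk_in_setT S a b n : walk_in r S a b n -> walk_in r setT a b n.
Proof. by move=> [p [Hs Hp Hl _]]; exists p; split => //; apply/allP => x _; rewrite inE. Qed.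

Lemma walk_in2 a b c : r a b -> r b c -> walk_in r setT a c 2.
Proof. by move=> Hab Hbc; exists [:: b; c]; rewrite /= Hab Hbc !inE. Qed.

Lemma dist_unique S a b d1 d2 : is_dist r S a b d1 -> is_dist r S a b d2 -> d1 = d2.
Proof.
move=> [W1 M1] [W2 M2]; case: (ltngtP d1 d2) => // H.
- by case: (M2 _ H W1).
- by case: (M1 _ H W2).
Qed.

Lemma exists_dist S a b n : walk_in r S a b n -> exists d, is_dist r S a b d.
Proof.
elim/ltn_ind: n => n IH Hw.
case: (classic (exists2 m, m < n & walk_in r S a b m)) => [[m Hm Wm] | Hn].
- exact: IH Wm.
- by exists n; split => // m Hm Wm; apply: Hn; exists m.
Qed.

Definition induced_path (f : nat -> A) (L : nat) : Prop :=
  [/\ forall i, i < L -> r (f i) (f i.+1),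
      forall i k, i <= L -> k <= L -> f i = f k -> i = k &
      forall i k, i <= L -> k <= L -> r (f i) (f k) -> i.+1 = k \/ k.+1 = i].

Definition induced_paths_shortest : Prop :=
  forall f L m, induced_path f L -> walk_in r setT (f 0) (f L) m -> L <= m.

Lemma eq_induced_path f g L :
  (forall i, i <= L -> f i = g i) -> induced_path f L -> induced_path g L.
Proof.
move=> Efg [Hw Hi Ha]; split => [i iL | i k iL kL | i k iL kL].
- by rewrite -!Efg //; [apply: Hw | lia].
- by rewrite -!Efg //; apply: Hi.
- by rewrite -!Efg //; apply: Ha.
Qed.

Lemma induced_path_sub f L a b :
  induced_path f L -> a <= b -> b <= L -> induced_path (fun t => f (a + t)) (b - a).
Proof.
move=> [Hw Hi Ha] ab bL; split => [t tL | t k tL kL | t k tL kL].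
- by rewrite addnS; apply: Hw; lia.
- by move/Hi; lia.
- by move/Ha; lia.
Qed.

Lemma induced_path_short f L m :
  induced_path f L -> walk_in r setT (f 0) (f L) m -> m <= 1 -> L <= m.
Proof.
move=> [_ Hi Ha] [[|x [|y p]] [<- /= Hp Hl _]] // _.
- by have := Hi 0 L (leq0n L) (leqnn L) Hl; lia.
- by move: Hp; rewrite andbT Hl => /(Ha 0 L (leq0n L) (leqnn L)); lia.
Qed.

Definition path_set (f : nat -> A) (L : nat) : {set A} := [set f i | i : 'I_L.+1].

Lemma path_setP f L x : reflect (exists2 i, i <= L & x = f i) (x \in path_set f L).
Proof.
apply: (iffP imsetP) => [[i _ ->] | [i iL ->]]; first by exists i => //; have := ltn_ord i; lia.
by exists (Ordinal (iL : i < L.+1)).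
Qed.

Lemma induced_path_shortest_within f L g m :
  induced_path f L -> walk_fun (path_set f L) g m -> g 0 = f 0 -> g m = f L -> L <= m.
Proof.
move=> [_ Hinj Hadj] [Hw Hin] g0 gm.
have Hreach k : k <= m -> exists i, [/\ i <= k, i <= L & g k = f i].
  elim: k => [|k IH] Hk; first by exists 0.
  have [i [ik iL gk]] := IH (ltnW Hk).
  have /path_setP [i' i'L gk'] := Hin _ Hk.
  have := Hw k Hk; rewrite gk gk' => /(Hadj _ _ iL i'L) Hii'.
  by exists i'; split => //; lia.
have [i [im iL gmi]] := Hreach m (leqnn m).
by have := Hinj _ _ iL (leqnn L); rewrite -gmi gm => /(_ erefl); lia.
Qed.

Section Symmetric.
Hypothesis r_sym : symmetric r.

Lemma induced_path_rev f L : induced_path f L -> induced_path (fun t => f (L - t)) L.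
Proof.
move=> [Hw Hi Ha]; split => [t tL | t k tL kL | t k tL kL].
- by rewrite r_sym (_ : L - t = (L - t.+1).+1); [apply: Hw | ]; lia.
- by move/Hi; lia.
- by move/Ha; lia.
Qed.

Lemma path_set_connected f L : induced_path f L -> induced_connected r (path_set f L).
Proof.
move=> Hf x y /path_setP [i iL ->] /path_setP [k kL ->].
wlog ik : i k x y iL kL / i <= k.
  move=> W; case: (leqP i k) => [|ki]; first exact: W.
  have [n /walk_inP [g [g0 gn [Hw Hm]]]] := W k i x y kL iL (ltnW ki).
  exists n; apply/walk_inP; exists (fun t => g (n - t)); rewrite subn0 subnn; split => //.
  split => [t tn | t tn]; last by apply: Hm; lia.
  by rewrite r_sym (_ : n - t = (n - t.+1).+1); [apply: Hw | ]; lia.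
have [Hw _ _] := Hf.
exists (k - i); apply/walk_inP; exists (fun t => f (i + t)); rewrite addn0 subnKC //.
split => //; split => [t tk | t tk].
- by rewrite addnS; apply: Hw; lia.
- by apply/path_setP; exists (i + t); [lia | ].
Qed.

Lemma dh_induced_paths_shortest : distance_hereditary r -> induced_paths_shortest.
Proof.
move=> Hdh f L m Hf Hwalk.
have f0P : f 0 \in path_set f L by apply/path_setP; exists 0.
have fLP : f L \in path_set f L by apply/path_setP; exists L.
have Hdist : is_dist r (path_set f L) (f 0) (f L) L.
  split.
  - apply/walk_inP; exists f; split => //; split => [i iL | i iL]; first by case: Hf => + _ _; apply.
    by apply/path_setP; exists i.
  - move=> n nL /walk_inP [g [g0 gn Hg]].
    by have := induced_path_shortest_within Hf Hg g0 gn; lia.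
have [_ Hmin] := (Hdh _ (path_set_connected Hf) _ _ f0P fLP L).1 Hdist.
by case: (leqP L m) => // mL; case: (Hmin m mL).
Qed.

Hypothesis r_irr : irreflexive r.

Lemma dist_induced_path S a b d :
  is_dist r S a b d -> exists f, [/\ f 0 = a, f d = b, walk_fun S f d & induced_path f d].
Proof.
move=> [/walk_inP [f [f0 fd Hf]] Hmin].
have no_shortcut s : 0 < s <= d -> ~ walk_in r S (f 0) (f d) (d - s).
  by move=> sd; rewrite f0 fd; apply: Hmin; lia.
exists f; split => //; split => [| i k iL kL | i k iL kL]; first by case: Hf.
- wlog ik : i k iL kL / i <= k.
    move=> W E; case: (leqP i k) => ik; first exact: W.
    by symmetry; apply: W => //; lia.
  move=> E; case: (ltnP i k) => ik'; last lia.
  exfalso; apply: (no_shortcut (k - i)); first lia.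
  apply: (walk_fun_shortcut (i := i) Hf); rewrite subnKC // ?E.
  + by case: Hf => + _; apply.
  + by move=> ->.
- wlog ik : i k iL kL / i <= k.
    move=> W E; case: (leqP i k) => ik; first exact: W.
    by rewrite r_sym in E; case: (W k i kL iL (ltnW ik) E); auto.
  move=> E; have [ik'|ki|<-] := ltngtP i.+1 k; last by left.
  + exfalso; apply: (no_shortcut (k - i.+1)); first lia.
    apply: (walk_fun_shortcut (i := i) Hf); try lia.
    by rewrite (_ : (i + (k - i.+1)).+1 = k) //; lia.
  + by move: E; rewrite (_ : k = i) ?r_irr //; lia.
Qed.

Lemma induced_paths_shortest_dh : induced_paths_shortest -> distance_hereditary r.
Proof.
move=> Hshort.
have distT S a b d : is_dist r S a b d -> is_dist r setT a b d.
  move=> /dist_induced_path [f [<- <- Hw Hf]]; split.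
  - by apply: (walk_in_setT (S := S)); apply/walk_inP; exists f.
  - by move=> m md /(Hshort _ _ _ Hf); lia.
move=> S Hconn a b aS bS d; split; first exact: distT.
move=> HdT; have [n /exists_dist [d' Hd']] := Hconn a b aS bS.
by rewrite (dist_unique HdT (distT _ _ _ _ Hd')).
Qed.

Lemma distance_hereditaryP : distance_hereditary r <-> induced_paths_shortest.
Proof. by split; [apply: dh_induced_paths_shortest | apply: induced_paths_shortest_dh]. Qed.

End Symmetric.
End InducedPaths.

Definition triangle_free (T : finType) (e : rel T) : Prop :=
  forall a b c, e a b -> e b c -> e a c -> False.

Section StarGraph.
Variables (T : finType) (e : rel T) (v v' : T).
Hypotheses (e_sym : symmetric e) (e_irr : irreflexive e) (e_tfree : triangle_free e)
  (e_shortest : induced_paths_shortest e).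
Local Notation star := (star_adj e v v').

Lemma star_adj_sym : symmetric star.
Proof. by move=> [x|] [y|] //=; rewrite e_sym. Qed.

Lemma star_adj_irr : irreflexive star.
Proof. by move=> [x|] //=. Qed.

Definition star_proxy (u : T) : Prop := forall z, e v z -> e v' z -> e u z.

Lemma star_proxy_l : star_proxy v. Proof. by move=> z. Qed.

Lemma star_proxy_r : star_proxy v'. Proof. by move=> z. Qed.

Lemma star_adj_proxy u : star_proxy u -> {homo odflt u : a b / star a b >-> e a b}.
Proof.
move=> Hu a b; case: a b => [x|] [y|] //= /andP [vx v'x]; last exact: Hu.
by rewrite e_sym; apply: Hu.
Qed.

Lemma star_proxy_shortest u f L m :
  star_proxy u -> induced_path e (odflt u \o f) L -> walk_in star setT (f 0) (f L) m -> L <= m.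
Proof. by move=> Hu Hf /(walk_in_hom (star_adj_proxy Hu)); exact: e_shortest Hf. Qed.

Lemma star_path_project u f L :
  star_proxy u -> induced_path star f L ->
  (forall i k x, i <= L -> k <= L -> f i = None -> f k = Some x ->
     x <> u /\ (e u x -> i.+1 = k \/ k.+1 = i)) ->
  induced_path e (odflt u \o f) L.
Proof.
move=> Hu [Hw Hi Ha] Hnew; split => [i iL | i k iL kL | i k iL kL] /=.
- exact: star_adj_proxy (Hw i iL).
- case Ei: (f i) => [x|]; case Ek: (f k) => [y|] /= Exy.
  + by apply: Hi; rewrite // Ei Ek Exy.
  + by case: (Hnew k i x kL iL Ek Ei) => /(_ Exy).
  + by case: (Hnew i k y iL kL Ei Ek) => /(_ (esym Exy)).
  + by apply: Hi; rewrite // Ei Ek.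
- case Ei: (f i) => [x|]; case Ek: (f k) => [y|] /= Exy.
  + by apply: Ha; rewrite // Ei Ek.
  + by rewrite e_sym in Exy; case: (Hnew k i x kL iL Ek Ei) => _ /(_ Exy) []; auto.
  + exact: (Hnew i k y iL kL Ei Ek).2.
  + by rewrite e_irr in Exy.
Qed.

Lemma star_path_Some f L i j :
  induced_path star f L -> f j = None -> i <= L -> j <= L -> i <> j -> exists x, f i = Some x.
Proof.
move=> [_ Hi _] fj iL jL ij; case Ei: (f i) => [x|]; first by exists x.
by case: ij; apply: Hi; rewrite // Ei fj.
Qed.

Lemma star_path_new_nbr f L i j :
  induced_path star f L -> f j = None -> i <= L -> j <= L -> i.+1 = j \/ j.+1 = i ->
  exists2 c, f i = Some c & e v c && e v' c.
Proof.
move=> Hf fj iL jL ij; have [c fi] := star_path_Some Hf fj iL jL (ltac:(lia) : i <> j).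
exists c => //; case: Hf => Hw _ _; case: ij => ij.
- by have := Hw i (ltac:(lia) : i < L); rewrite ij fi fj.
- by have := Hw j (ltac:(lia) : j < L); rewrite ij fi fj.
Qed.

Lemma star_path_segment f L j a b :
  induced_path star f L -> f j = None -> j <= L -> j < a \/ b < j -> a <= b -> b <= L ->
  induced_path e (odflt v \o (fun t => f (a + t))) (b - a).
Proof.
move=> Hf fj jL jab ab bL.
apply: star_path_project star_proxy_l (induced_path_sub Hf ab bL) _ => i k x iL _ fi _.
by case: Hf => _ Hi _; have := Hi _ _ (ltac:(lia) : a + i <= L) jL; rewrite fi fj => /(_ erefl); lia.
Qed.

Lemma star_path_gap f L j a b u c x :
  induced_path star f L -> f j = None -> j <= L -> j < a \/ b < j -> a <= b -> b <= L ->
  f a = Some c -> f b = Some x -> e u c -> e u x -> b = a \/ b = a.+2.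
Proof.
move=> Hf fj jL jab ab bL fa fb uc ux.
have Hs := star_path_segment Hf fj jL jab ab bL.
have Hle : b - a <= 2.
  apply: e_shortest Hs _; rewrite /= addn0 subnKC // fa fb.
  by apply: (walk_in2 (b := u)); rewrite // e_sym.
have [ba | ba] := eqVneq (b - a) 1; last lia.
case: Hs => Hw _ _; have := Hw 0; rewrite ba /= addn0 addn1 (_ : a.+1 = b) ?fa ?fb; try lia.
by move=> /(_ isT) cx; case: (e_tfree uc cx ux).
Qed.

Lemma star_path_not_on f L j k u c1 c2 :
  induced_path star f L -> f j = None -> 0 < j -> j < L -> k <= L ->
  f j.-1 = Some c1 -> f j.+1 = Some c2 -> e u c1 -> e u c2 -> f k = Some u -> False.
Proof.
move=> [_ _ Ha] fj j0 jL kL f1 f2 uc1 uc2 fk.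
have /Ha : star (f k) (f j.-1) by rewrite fk f1.
have /Ha : star (f k) (f j.+1) by rewrite fk f2.
move=> /(_ kL jL) H2 /(_ kL (ltac:(lia) : j.-1 <= L)) H1.
by move: fk; rewrite (_ : k = j) ?fj //; lia.
Qed.

Lemma star_path_domino f L j x :
  induced_path star f L -> f j = None -> 3 <= j -> j < L -> f (j - 3) = Some x -> e v x -> False.
Proof.
move=> Hf fj j3 jL fx vx.
pose g t := f (j - 3 + t).
have Hg : induced_path star g 4.
  by rewrite (_ : 4 = j.+1 - (j - 3)); [apply: induced_path_sub Hf _ jL | ]; lia.
have g3 : g 3 = None by rewrite /g subnK.
have g0 : g 0 = Some x by rewrite /g addn0.
have [y g1] := star_path_Some (i := 1) Hg g3 isT isT (ltac:(by []) : 1 <> 3).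
have [c1 g2 /andP [_ v'c1]] := star_path_new_nbr (i := 2) Hg g3 isT isT (or_introl erefl).
have [c2 g4 /andP [vc2 v'c2]] := star_path_new_nbr (i := 4) Hg g3 isT isT (or_intror erefl).
case: (Hg) => Hw Hi Ha.
have v'x : ~~ e v' x.
  by apply/negP => v'x; have := Ha 3 0; rewrite g3 g0 /= vx v'x => /(_ isT isT isT) [].
(* x, g 1, g 2, v', g 4 is an induced path of G; with v it would induce a domino. *)
have Hproj : induced_path e (odflt v' \o g) 4.
  apply: (star_path_project star_proxy_r Hg) => i k z iL kL gi gk.
  have {i iL gi} -> : i = 3 by apply: Hi; rewrite // gi g3.
  split => [Ez | v'z].
    by rewrite Ez in gk; apply: star_path_not_on Hg g3 _ _ kL g2 g4 v'c1 v'c2 gk.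
  case: k kL gk => [|[|[|[|[|k]]]]] // _ gk; [| | by right | by rewrite g3 in gk | by left].
  - by move: gk; rewrite g0 => -[Ez]; subst z; rewrite v'z in v'x.
  - move: gk; rewrite g1 => -[Ez]; subst z.
    by have := Hw 1 isT; rewrite g1 g2 => yc1; case: (e_tfree v'z yc1 v'c1).
have : 4 <= 2.
  apply: (e_shortest Hproj); rewrite /= g0 g4.
  by apply: (walk_in2 (b := v)); rewrite // e_sym.
by [].
Qed.

Lemma star_path_inner_left f L j k x :
  induced_path star f L -> f j = None -> j < L -> k.+1 < j -> f k = Some x -> e v x -> False.
Proof.
move=> Hf fj jL kj fk vx.
have [c1 fc1 /andP [vc1 _]] := star_path_new_nbr (i := j.-1) Hf fj (ltac:(lia)) (ltnW jL) (ltac:(lia)).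
have [|jk] := star_path_gap (a := k) (b := j.-1) Hf fj (ltnW jL) (ltac:(lia)) (ltac:(lia)) (ltac:(lia)) fk fc1 vx vc1; first lia.
by apply: (star_path_domino Hf fj _ jL _ vx); [lia | rewrite (_ : j - 3 = k) //; lia].
Qed.

Lemma star_path_inner f L j :
  induced_path star f L -> f j = None -> 0 < j -> j < L -> induced_path e (odflt v \o f) L.
Proof.
move=> Hf fj j0 jL.
have [c1 fc1 /andP [vc1 _]] := star_path_new_nbr (i := j.-1) Hf fj (ltac:(lia)) (ltnW jL) (ltac:(lia)).
have [c2 fc2 /andP [vc2 _]] := star_path_new_nbr (i := j.+1) Hf fj jL (ltnW jL) (or_intror erefl).
apply: (star_path_project star_proxy_l Hf) => i k x iL kL fi fk.
have {i iL fi} -> : i = j by case: Hf => _ Hi _; apply: Hi; rewrite ?fi ?fj //; lia.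
split => [Ex | vx]; first by rewrite Ex in fk; exact: star_path_not_on Hf fj j0 jL kL fc1 fc2 vc1 vc2 fk.
have [kj | jk | kj] := ltngtP k j; last by rewrite kj fj in fk.
- have [|k1j] := eqVneq k.+1 j; first by right.
  by case: (star_path_inner_left (k := k) Hf fj jL (ltac:(lia)) fk vx).
- have [|j1k] := eqVneq j.+1 k; first by left.
  have Hr := induced_path_rev star_adj_sym Hf.
  by exfalso; apply: (star_path_inner_left (j := L - j) (k := L - k) (x := x) Hr); rewrite ?subKn //; lia.
Qed.

Lemma star_path_start_proxy u f L y :
  star_proxy u -> induced_path star f L -> f 0 = None -> 3 <= L -> f 3 = Some y -> ~~ e u y ->
  induced_path e (odflt u \o f) L.
Proof.
move=> Hu Hf f0 L3 fy uy.
have [c fc /andP [vc v'c]] := star_path_new_nbr (i := 1) Hf f0 (ltac:(lia)) (leq0n L) (or_intror erefl).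
have uc := Hu c vc v'c.
case: (Hf) => Hw Hi Ha.
apply: (star_path_project Hu Hf) => i k x iL kL fi fk.
have {i iL fi} -> : i = 0 by apply: Hi; rewrite // fi f0.
have k0 : k != 0 by apply/eqP => k0; rewrite k0 f0 in fk.
split => [Ex | ux].
- rewrite Ex in fk.
  have [k1|k2] : k.+1 = 1 \/ 2 = k by apply: Ha; rewrite ?fk ?fc //; lia.
  + by case: k1 k0 => ->.
  + by move: fk; rewrite -k2 => fk; have := Hw 2 (ltac:(lia)); rewrite fk fy /= (negbTE uy).
- have [<-|k3] := star_path_gap (a := 1) (b := k) Hf f0 (leq0n L) (ltac:(lia)) (ltac:(lia)) kL fc fk uc ux; first by left.
  by move: fk; rewrite k3 fy => -[Exy]; rewrite Exy ux in uy.
Qed.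

Lemma star_path_start f L :
  induced_path star f L -> f 0 = None -> 3 <= L -> exists2 u, star_proxy u & induced_path e (odflt u \o f) L.
Proof.
move=> Hf f0 L3.
have [y fy] := star_path_Some (i := 3) Hf f0 L3 (leq0n L) (ltac:(by [])).
have : ~~ (e v y && e v' y).
  by apply/negP => vy; case: Hf => _ _ /(_ 0 3 (leq0n L) L3); rewrite f0 fy => /(_ vy) [].
case/nandP => uy; [exists v; first exact: star_proxy_l | exists v'; first exact: star_proxy_r];
  exact: star_path_start_proxy Hf f0 L3 fy uy.
Qed.

Lemma star_path_projection f L :
  induced_path star f L -> 3 <= L -> exists2 u, star_proxy u & induced_path e (odflt u \o f) L.
Proof.
move=> Hf L3; case: (boolP [exists j : 'I_L.+1, f j == None]) => [/existsP [[j /= jL] /eqP fj] | noNew].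
- have [j0 | j0] := posnP j; first by rewrite j0 in fj; exact: star_path_start Hf fj L3.
  have [jL' | Lj] := ltnP j L; first by exists v; [exact: star_proxy_l | exact: star_path_inner Hf fj j0 jL'].
  have Hr := induced_path_rev star_adj_sym Hf.
  have [|u Hu Hru] := star_path_start Hr _ L3; first by rewrite subn0 (_ : L = j) //; lia.
  exists u => //; apply: eq_induced_path (induced_path_rev e_sym Hru) => i iL /=.
  by rewrite subKn.
- exists v; first exact: star_proxy_l.
  apply: (star_path_project star_proxy_l Hf) => i k x iL _ fi _.
  by move/existsP: noNew; case; exists (Ordinal (iL : i < L.+1)); rewrite /= fi.
Qed.

Lemma star_induced_paths_shortest : induced_paths_shortest star.
Proof.
move=> f L m Hf Hw.
have [m1 | m2] := leqP m 1; first exact: induced_path_short Hf Hw m1.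
have [L2 | L3] := leqP L 2; first exact: leq_trans L2 m2.
have [u Hu Hfu] := star_path_projection Hf L3.
exact: star_proxy_shortest Hu Hfu Hw.
Qed.

End StarGraph.

Lemma bipartite_withP (T : finType) (e : rel T) (X Y : {set T}) :
  bipartite_with e X Y <-> Y = ~: X /\ forall x y, e x y -> (x \in X) != (y \in X).
Proof.
split => [[XY0 XYT Hb] | [-> Hb]].
- have YE : Y = ~: X.
    apply/setP => x; move/setP/(_ x): XY0; move/setP/(_ x): XYT.
    by rewrite !inE; case: (x \in X); case: (x \in Y).
  split => // x y /Hb; rewrite YE !inE.
  by case: (x \in X); case: (y \in X).
- split; [exact: setICr | exact: setUCr | move=> x y /Hb].
  by rewrite !inE; case: (x \in X); case: (y \in X).
Qed.

Lemma bipartite_triangle_free (T : finType) (e : rel T) (X Y : {set T}) :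
  bipartite_with e X Y -> triangle_free e.
Proof.
case/bipartite_withP => _ Hb a b c /Hb ab /Hb bc /Hb ac.
by move: ab bc ac; case: (a \in X); case: (b \in X); case: (c \in X).
Qed.

Lemma star_bipartite (T : finType) (e : rel T) (X Y : {set T}) (v v' : T) :
  bipartite_with e X Y ->
  bipartite_with (star_adj e v v') (star_class v X) (star_class v Y).
Proof.
case/bipartite_withP => -> Hb; apply/bipartite_withP; split.
  by apply/setP => -[x|]; rewrite !inE.
move=> [x|] [y|] //=; rewrite !inE.
- exact: Hb.
- by case/andP => /Hb; rewrite eq_sym.
- by case/andP => /Hb.
Qed.

Theorem theorem3 (T : finType) (e : rel T) (X Y : {set T}) (v v' : T) :
  BDH_with e X Y ->
  if (v \in X) == (v' \in X) then
    BDH_with (star_adj e v v') (star_class v X) (star_class v Y)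
  else
    BDH_with e X Y.
Proof.
move=> [[e_sym e_irr] Hbip Hdh]; case: ifP => _; last by split.
have e_tfree := bipartite_triangle_free Hbip.
have star_sym := star_adj_sym v v' e_sym.
have star_irr := star_adj_irr v v' e_irr.
split; [by split | exact: star_bipartite |].
apply/(distance_hereditaryP star_sym star_irr).
exact/star_induced_paths_shortest/(distance_hereditaryP e_sym e_irr).
Qed.
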